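(* Let $m$ be an odd positive integer and $\ell=\lceil\log_2 m\rceil$. Suppose $m=2^Lh+1$ where $L\geq 3$ is an integer and $h$ is an odd positive integer. Then $\mathfrak K(m)<\left(1+\frac{2^{L+1}+4}{m}\right)2^\ell$.
   Context: The Thue–Morse word is $\mathbf t=\mathbf t_1\mathbf t_2\cdots$ where $\mathbf t_i\in\{0,1\}$ has the parity of the number of $1$'s in the binary expansion of $i-1$. For positive integers $\alpha\le\beta$, $\langle\alpha,\beta\rangle=\mathbf t_\alpha\cdots\mathbf t_\beta$. A $k$-anti-power is a word $w_1\cdots w_k$ with $w_1,\dots,w_k$ pairwise distinct words of equal length. For a positive integer $m$, $\mathfrak K(m)$ is the smallest positive integer $k$ such that the prefix $\langle 1,km\rangle$ of $\mathbf t$ is not a $k$-anti-power. *)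

From HB Require Import structures.
From mathcomp Require Import all_boot all_order all_algebra.
Set Implicit Arguments. Unset Strict Implicit. Unset Printing Implicit Defensive.

(* Number of 1's in the binary expansion of n (bits j < n suffice since n < 2^n). *)
Definition binary_ones (n : nat) : nat := \sum_(j < n) odd (n %/ 2 ^ j).

(* Thue-Morse word, 1-indexed: t_i = parity of number of 1's of i-1. *)
Definition tm (i : nat) : bool := odd (binary_ones i.-1).

Definition tm_factor (alpha beta : nat) : seq bool :=
  [seq tm i | i <- iota alpha (beta.+1 - alpha)].

Definition anti_power (k : nat) (w : seq bool) : bool :=
  (k %| size w) &&
  uniq [seq take (size w %/ k) (drop (j * (size w %/ k)) w) | j <- iota 0 k].

Definition K_pred (m : nat) : pred nat :=
  fun k => (0 < k) && ~~ anti_power k (tm_factor 1 (k * m)).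

Lemma seq_size_uniq_bound (m : nat) (s : seq (seq bool)) :
  uniq s -> all (fun x => size x == m) s -> size s <= 2 ^ m.
Proof.
move=> us alls.
pose f (x : seq bool) : m.-tuple bool := insubd (nseq_tuple m false) x.
have finj : {in s &, injective f}.
  move=> x y xs ys; rewrite /f => E.
  have := congr1 val E; rewrite !val_insubd.
  by move: (allP alls x xs) (allP alls y ys) => -> ->.
have u : uniq (map f s) by rewrite map_inj_in_uniq.
rewrite -(size_map f) -(card_uniqP u).
by apply: leq_trans (max_card _) _; rewrite card_tuple card_bool.
Qed.

Lemma K_exists (m : nat) : exists k, K_pred m k.
Proof.
exists (2 ^ m).+1; rewrite /K_pred /=; apply/negP => /andP [_ u].
have sz : size (tm_factor 1 ((2 ^ m).+1 * m)) = (2 ^ m).+1 * m.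
  by rewrite /tm_factor size_map size_iota subSS subn0.
move: u; rewrite sz mulKn // => u.
suff : (2 ^ m).+1 <= 2 ^ m by rewrite ltnn.
rewrite -{1}[(2 ^ m).+1](size_iota 0).
rewrite -(size_map (fun j => take m (drop (j * m) (tm_factor 1 ((2 ^ m).+1 * m))))).
apply: (seq_size_uniq_bound u).
apply/allP => x /mapP [j]; rewrite mem_iota add0n => jk ->.
rewrite size_take size_drop sz.
have : m <= (2 ^ m).+1 * m - j * m.
  by rewrite -mulnBl leq_pmull // subn_gt0.
by rewrite leq_eqVlt => /orP [/eqP <-|->] //; rewrite ltnn.
Qed.

Definition frakK (m : nat) : nat := ex_minn (K_exists m).

(* Write t(n) for the 0-indexed Thue-Morse sequence, so that t(a + 2^k b) = t(a) xor t(b)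
   whenever a < 2^k, and let 2^l be the least power of two with m <= 2^l.  If t agrees with
   its shift by m at the two consecutive positions q and q+1, then t agrees with its shift
   by 2^l m on the whole window [q 2^l, (q+2) 2^l), which has length at least 2m.  That
   window contains a full block [i m, (i+1) m) of the prefix, which therefore coincides with
   the block of index i + 2^l; hence K(m) <= i + 2^l + 1 with i m < q 2^l + m.  For
   m = 2^L h + 1 with h odd, a case analysis on t(h) and t(h+1) produces such a q with
   q <= 2^(L+1) + 2, which gives the bound. *)
From mathcomp Require Import all_boot all_order all_algebra.
From mathcomp Require Import zify.
Import Order.TTheory GRing.Theory Num.Theory.

Set Implicit Arguments.
Unset Strict Implicit.
Unset Printing Implicit Defensive.

Definition bits_sum (N n : nat) : nat := \sum_(0 <= j < N) odd (n %/ 2 ^ j).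

Lemma bits_sum_widen N M n : n < 2 ^ N -> N <= M -> bits_sum M n = bits_sum N n.
Proof.
move=> nN NM; rewrite /bits_sum (big_cat_nat (n := N)) //=.
rewrite [X in _ + X]big1_seq ?addn0 // => j /andP[_]; rewrite mem_iota => /andP[Nj _].
by rewrite divn_small //; apply: leq_trans nN _; rewrite leq_pexp2l.
Qed.

Lemma binary_onesE N n : n < 2 ^ N -> binary_ones n = bits_sum N n.
Proof.
move=> nN; have -> : binary_ones n = bits_sum n n by rewrite /bits_sum big_mkord.
have n_lt : n < 2 ^ n by rewrite ltn_expl.
rewrite -(bits_sum_widen n_lt (leq_maxr N n)).
exact: bits_sum_widen nN (leq_maxl N n).
Qed.

Lemma bits_sumS N n (b : bool) : bits_sum N.+1 (b + 2 * n) = b + bits_sum N n.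
Proof.
rewrite /bits_sum big_nat_recl //= expn0 divn1 oddD oddM /= ?andbF ?addbF oddb.
congr (_ + _); apply: eq_bigr => j _.
rewrite expnS divnMA; congr (odd (_ %/ _)).
by rewrite mulnC addnC divnMDl // divn_small ?addn0 //; case: b.
Qed.

(* 0-indexed, so that [tm i.+1 = tm0 i]. *)
Definition tm0 (n : nat) : bool := odd (binary_ones n).

Lemma tm0_0 : tm0 0 = false.
Proof. by rewrite /tm0 /binary_ones big_ord0. Qed.

Lemma tm0_bit (b : bool) n : tm0 (b + 2 * n) = b (+) tm0 n.
Proof.
have nN : n < 2 ^ n by rewrite ltn_expl.
have bnN : b + 2 * n < 2 ^ n.+1.
  by rewrite expnS; move: nN (leq_b1 b); move: (2 ^ n) => p; lia.
by rewrite /tm0 (binary_onesE bnN) (binary_onesE nN) bits_sumS oddD oddb.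
Qed.

Lemma tm0_add_pow2 k a b : a < 2 ^ k -> tm0 (a + 2 ^ k * b) = tm0 a (+) tm0 b.
Proof.
elim: k a => [|k IHk] a.
  by rewrite expn0 ltnS leqn0 => /eqP ->; rewrite mul1n add0n tm0_0.
rewrite expnS => ak.
have aE : a = odd a + 2 * a./2 by rewrite -[LHS]odd_double_half -mul2n.
have a2k : a./2 < 2 ^ k.
  by move: ak (odd_double_half a); rewrite -mul2n; move: (2 ^ k) => p; lia.
have -> : a + 2 * 2 ^ k * b = odd a + 2 * (a./2 + 2 ^ k * b).
  by move: aE; move: (2 ^ k) => p; lia.
by rewrite tm0_bit IHk // [in RHS]aE tm0_bit addbA.
Qed.

Lemma tm0_1 : tm0 1 = true. Proof. by rewrite (tm0_bit true 0) tm0_0. Qed.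
Lemma tm0_2 : tm0 2 = true. Proof. by rewrite (tm0_bit false 1) tm0_1. Qed.
Lemma tm0_3 : tm0 3 = false. Proof. by rewrite (tm0_bit true 1) tm0_1. Qed.
Lemma tm0_4 : tm0 4 = true. Proof. by rewrite (tm0_bit false 2) tm0_2. Qed.
Lemma tm0_5 : tm0 5 = false. Proof. by rewrite (tm0_bit true 2) tm0_2. Qed.

Lemma size_tm_prefix n : size (tm_factor 1 n) = n.
Proof. by rewrite size_map size_iota subSS subn0. Qed.

Lemma nth_tm_prefix n x : x < n -> nth false (tm_factor 1 n) x = tm0 x.
Proof.
move=> xn; rewrite (nth_map 0) ?size_iota ?subSS ?subn0 //.
by rewrite nth_iota ?subSS ?subn0 // add1n.
Qed.

Lemma K_pred_equal_blocks k m i j : i < k -> j < k -> i != j ->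
  (forall r, r < m -> tm0 (i * m + r) = tm0 (j * m + r)) -> K_pred m k.
Proof.
move=> ik jk ij eq_ij.
have k0 : 0 < k by apply: leq_ltn_trans ik.
rewrite /K_pred k0 /anti_power size_tm_prefix mulKn //; apply/negP => /andP[_].
set w := tm_factor 1 (k * m); set block := fun a => take m (drop (a * m) w).
have block_in a : a < k -> m <= k * m - a * m.
  by move=> ak; rewrite -mulnBl leq_pmull ?subn_gt0.
have eq_block : block i = block j.
  apply: (@eq_from_nth _ false).
    by rewrite !size_takel ?size_drop ?size_tm_prefix ?block_in.
  move=> r; rewrite size_takel ?size_drop ?size_tm_prefix ?block_in // => rm.
  have := block_in i ik; have := block_in j jk.
  by rewrite !nth_take // !nth_drop => ? ?; rewrite !nth_tm_prefix ?eq_ij //; lia.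
move=> /(nth_uniq [::] (i := i) (j := j)); rewrite !size_map size_iota => /(_ ik jk).
rewrite !(nth_map 0) ?size_iota // !nth_iota // !add0n.
by rewrite -/(block i) -/(block j) eq_block eqxx (negbTE ij).
Qed.

Lemma frakK_min m k : K_pred m k -> frakK m <= k.
Proof. by rewrite /frakK; case: ex_minnP => k0 _; apply. Qed.

Lemma tm0_shift_block l m q x : q * 2 ^ l <= x < q * 2 ^ l + 2 ^ l ->
  tm0 (q + m) = tm0 q -> tm0 (x + 2 ^ l * m) = tm0 x.
Proof.
move=> /andP[qx xq] tm0_qm.
have -> : x = (x - q * 2 ^ l) + 2 ^ l * q by rewrite [2 ^ l * q]mulnC subnK.
have rl : x - q * 2 ^ l < 2 ^ l by lia.
by rewrite -addnA -mulnDr !tm0_add_pow2 // tm0_qm.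
Qed.

Section ShiftAgreement.

Variables (m l q : nat).
Hypotheses (m_gt0 : 0 < m) (m_le : m <= 2 ^ l).
Hypotheses (tm0_q : tm0 (q + m) = tm0 q) (tm0_qS : tm0 (q.+1 + m) = tm0 q.+1).

Let i := (q * 2 ^ l + m.-1) %/ m.

Lemma tm0_shift_double_block x : q * 2 ^ l <= x < q.+2 * 2 ^ l ->
  tm0 (x + 2 ^ l * m) = tm0 x.
Proof.
rewrite !mulSn => /andP[qx xq]; case: (ltnP x (q * 2 ^ l + 2 ^ l)) => xl.
  by apply: (tm0_shift_block (q := q)) => //; rewrite qx.
by apply: (tm0_shift_block (q := q.+1)) => //; rewrite mulSn; lia.
Qed.

Lemma K_pred_shift : K_pred m (i + 2 ^ l + 1).
Proof.
have i_lb : q * 2 ^ l + m.-1 < i.+1 * m by apply: ltn_ceil.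
have i_ub : i * m <= q * 2 ^ l + m.-1 by apply: leq_trunc_div.
have l_gt0 : 0 < 2 ^ l by rewrite expn_gt0.
apply: (@K_pred_equal_blocks _ _ i (i + 2 ^ l)); try lia.
move=> r rm.
have -> : (i + 2 ^ l) * m + r = (i * m + r) + 2 ^ l * m.
  by rewrite mulnDl [2 ^ l * m]mulnC; lia.
rewrite tm0_shift_double_block //; rewrite !mulSn in i_lb *; lia.
Qed.

Lemma frakK_shift_bound : frakK m * m < (q.+2 + m) * 2 ^ l.
Proof.
have i_ub : i * m <= q * 2 ^ l + m.-1 by apply: leq_trunc_div.
apply: leq_ltn_trans (_ : (i + 2 ^ l + 1) * m < _).
  by rewrite leq_mul2r frakK_min ?orbT ?K_pred_shift.
by rewrite !mulnDl !mulSn [2 ^ l * m]mulnC; lia.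
Qed.

End ShiftAgreement.

Lemma tm_shift_witness L h : 3 <= L -> odd h ->
  exists2 q, q <= 2 ^ L.+1 + 2 &
    tm0 (q + (2 ^ L * h + 1)) = tm0 q /\ tm0 (q.+1 + (2 ^ L * h + 1)) = tm0 q.+1.
Proof.
move=> L3 odd_h; set m := 2 ^ L * h + 1.
have L8 : 8 <= 2 ^ L by rewrite -[8]/(2 ^ 3) leq_pexp2l.
have tm0_pow2 a b : a < 2 ^ L -> tm0 (a + 2 ^ L * b) = tm0 a (+) tm0 b.
  exact: tm0_add_pow2.
case th : (tm0 h).
  exists 3; first by rewrite expnS; lia.
  have -> : 3 + m = 4 + 2 ^ L * h by rewrite /m; lia.
  have -> : 4 + m = 5 + 2 ^ L * h by rewrite /m; lia.
  by rewrite !tm0_pow2 ?th ?tm0_3 ?tm0_4 ?tm0_5 //; lia.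
have [h' hE] : exists h', h = 1 + 2 * h'.
  by exists h./2; rewrite -[LHS]odd_double_half odd_h -mul2n.
have th2 : tm0 (h + 2) = ~~ tm0 (h + 1).
  have -> : h + 2 = true + 2 * h'.+1 by rewrite hE /=; lia.
  have -> : h + 1 = false + 2 * h'.+1 by rewrite hE /=; lia.
  by rewrite !tm0_bit.
case th1 : (tm0 (h + 1)).
  exists (2 + 2 ^ L * 2); first by rewrite expnS; lia.
  have -> : 2 + 2 ^ L * 2 + m = 3 + 2 ^ L * (h + 2) by rewrite /m; lia.
  have -> : (2 + 2 ^ L * 2).+1 + m = 4 + 2 ^ L * (h + 2) by rewrite /m; lia.
  have -> : (2 + 2 ^ L * 2).+1 = 3 + 2 ^ L * 2 by lia.
  by rewrite !tm0_pow2 ?th2 ?th1 ?tm0_2 ?tm0_3 ?tm0_4 //; lia.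
exists (3 + 2 ^ L * 1); first by rewrite expnS; lia.
have -> : 3 + 2 ^ L * 1 + m = 4 + 2 ^ L * (h + 1) by rewrite /m; lia.
have -> : (3 + 2 ^ L * 1).+1 + m = 5 + 2 ^ L * (h + 1) by rewrite /m; lia.
have -> : (3 + 2 ^ L * 1).+1 = 4 + 2 ^ L * 1 by lia.
by rewrite !tm0_pow2 ?th1 ?tm0_1 ?tm0_3 ?tm0_4 ?tm0_5 //; lia.
Qed.

Theorem lemma8 (m L h : nat) :
  odd m -> 0 < m -> m = 2 ^ L * h + 1 -> 3 <= L -> odd h -> 0 < h ->
  (((frakK m)%:R : rat) <
    (1 + ((2 ^ L.+1 + 4)%N%:R / m%:R)) * (2 ^ up_log 2 m)%N%:R)%R.
Proof.
move=> _ m_gt0 mE L3 odd_h _; set l := up_log 2 m; set c := 2 ^ L.+1 + 4.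
have [q q_le [tm0_q tm0_qS]] := tm_shift_witness L3 odd_h; rewrite -mE in tm0_q tm0_qS.
have bound : frakK m * m < (m + c) * 2 ^ l.
  apply: leq_trans (frakK_shift_bound m_gt0 (up_logP m (ltnSn 1)) tm0_q tm0_qS) _.
  by rewrite leq_mul2r /c; lia.
have -> : (1 + c%:R / m%:R)%R = ((m + c)%:R / m%:R : rat)%R.
  by rewrite natrD mulrDl divff // pnatr_eq0 -lt0n.
by rewrite mulrAC ltr_pdivlMr ?ltr0n // -!natrM ltr_nat.
Qed.
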